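(* Fix an instance of MCND and a partial aggregation $\mathcal{B}$ (see context). (i) Every feasible solution $(x,y)$ of the LP relaxation of the PAi formulation built on $\mathcal{B}$ is a feasible solution of the LP relaxation of the PA formulation built on the same $\mathcal{B}$. (ii) There exist an instance and a partial aggregation $\mathcal{B}$ for which the LP relaxation of PA has a feasible solution that is not feasible for the LP relaxation of PAi. (That is, PAi is stronger than PA.)
   Context: An instance of MCND consists of a directed graph $G=(\mathcal{N},\mathcal{A})$, a finite set $\mathcal{K}$ of commodities, each $k\in\mathcal{K}$ having an origin $o^k\in\mathcal{N}$, a destination $s^k\in\mathcal{N}$ and a demand $d^k\ge 0$, and for each arc $(i,j)\in\mathcal{A}$ a capacity $u_{ij}$, a per-unit flow cost $c_{ij}$ and a fixed cost $f_{ij}$, all nonnegative. Let $o_i^k=1$ if $i=o^k$ and $0$ otherwise, $s_i^k=1$ if $i=s^k$ and $0$ otherwise, $\mathcal{N}_i^+=\{j:(i,j)\in\mathcal{A}\}$, $\mathcal{N}_i^-=\{j:(j,i)\in\mathcal{A}\}$. Dispersion: a nonempty set $\mathcal{K}_b\subseteq\mathcal{K}$ of commodities sharing a common origin, together with, for every arc $(i,j)\in\mathcal{A}$, a partition of $\mathcal{K}_b$ into $\mathcal{K}_b^{ij}$ (aggregated on $(i,j)$) and $\mathcal{D}_b^{ij}$ (disaggregated on $(i,j)$); either part may be empty. Let $\mathcal{G}_b^{ij}$ be the family consisting of the set $\mathcal{K}_b^{ij}$ (if nonempty) together with the singletons $\{k\}$, $k\in\mathcal{D}_b^{ij}$. A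 partial aggregation is a set $\mathcal{B}$ of dispersions such that every $k\in\mathcal{K}$ lies in $\mathcal{K}_b$ for exactly one $b\in\mathcal{B}$. LP relaxation of PA (for $\mathcal{B}$): variables $x_{ij}^D\ge0$ for $(i,j)\in\mathcal{A}$, $b\in\mathcal{B}$, $D\in\mathcal{G}_b^{ij}$ (since the $\mathcal{K}_b$ are disjoint, $D$ determines $b$), and $0\le y_{ij}\le1$; minimize $\sum_{(i,j)}c_{ij}\sum_{b}\sum_{D\in\mathcal{G}_b^{ij}}x_{ij}^D+\sum_{(i,j)}f_{ij}y_{ij}$ subject to: for all $b\in\mathcal{B}$, $i\in\mathcal{N}$: $\sum_{j\in\mathcal{N}_i^+}\sum_{D\in\mathcal{G}_b^{ij}}x_{ij}^D-\sum_{j\in\mathcal{N}_i^-}\sum_{D\in\mathcal{G}_b^{ji}}x_{ji}^D=\sum_{k\in\mathcal{K}_b}(o_i^k-s_i^k)d^k$; for all $(i,j)$: $\sum_b\sum_{D\in\mathcal{G}_b^{ij}}x_{ij}^D\le u_{ij}y_{ij}$; for all $(i,j),b,D\in\mathcal{G}_b^{ij}$: $x_{ij}^D\le(\sum_{k\in D}d^k)y_{ij}$. LP relaxation of PAi: the PA LP plus, for all $b\in\mathcal{B}$, $k\in\mathcal{K}_b$, $i\in\mathcal{N}$: $\sum_{j\in\mathcal{N}_i^+}\sum_{D\in\mathcal{G}_b^{ij}:k\in D}x_{ij}^D-\sum_{j\in\mathcal{N}_i^-}\sum_{D\in\mathcal{G}_b^{ji}:D=\{k\}}x_{ji}^D\ge(o_i^k-s_i^k)d^k$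 and $\sum_{j\in\mathcal{N}_i^+}\sum_{D\in\mathcal{G}_b^{ij}:D=\{k\}}x_{ij}^D-\sum_{j\in\mathcal{N}_i^-}\sum_{D\in\mathcal{G}_b^{ji}:k\in D}x_{ji}^D\le(o_i^k-s_i^k)d^k$. *)

From HB Require Import structures.
From mathcomp Require Import all_boot all_order all_algebra.
Set Implicit Arguments. Unset Strict Implicit. Unset Printing Implicit Defensive.
Import Order.TTheory GRing.Theory Num.Theory.
Local Open Scope ring_scope.

(* An MCND instance: directed graph (arcs given by a relation on nodes, so
   arcs are ordered pairs (i,j)), commodities with origin, destination and
   demand, and per-arc capacity, unit flow cost and fixed cost. *)
Record mcnd (R : realFieldType) := MCND {
  node : finType;
  arc : rel node;
  comm : finType;
  orig : comm -> node;
  dest : comm -> node;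
  demand : comm -> R;
  cap : node -> node -> R;
  ucost : node -> node -> R;
  fcost : node -> node -> R;
  demand_ge0 : forall k, 0 <= demand k;
  cap_ge0 : forall i j, arc i j -> 0 <= cap i j;
  ucost_ge0 : forall i j, arc i j -> 0 <= ucost i j;
  fcost_ge0 : forall i j, arc i j -> 0 <= fcost i j
}.

(* A partial aggregation: a finite family of dispersions b, each with its
   commodity set K_b (nonempty, common origin) and, per arc (i,j), the
   aggregated part K_b^{ij} = aggr b i j (a subset of K_b); the disaggregated
   part is D_b^{ij} = K_b \ K_b^{ij}. *)
Record partial_agg (R : realFieldType) (I : mcnd R) := PartialAgg {
  disp : finType;
  Kb : disp -> {set comm I};
  aggr : disp -> node I -> node I -> {set comm I};
  Kb_neq0 : forall b, Kb b != set0;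
  Kb_origin : forall b k k', k \in Kb b -> k' \in Kb b -> orig k = orig k';
  aggr_sub : forall b i j, aggr b i j \subset Kb b;
  Kb_cover : forall k, exists! b, k \in Kb b
}.

Section Formulations.
Variables (R : realFieldType) (I : mcnd R) (P : partial_agg I).

Definition Gb (b : disp P) (i j : node I) : {set {set comm I}} :=
  (if aggr b i j != set0 then [set aggr b i j] else set0)
  :|: [set [set k] | k in Kb b :\: aggr b i j].

Definition os (i : node I) (k : comm I) : R :=
  (orig k == i)%:R - (dest k == i)%:R.

(* x_{ij}^D is represented as x i j D (D determines b since the K_b are
   disjoint); y_{ij} as y i j. Only values on arcs / D in G_b^{ij} matter. *)
Definition PA_feasible (x : node I -> node I -> {set comm I} -> R)
    (y : node I -> node I -> R) : Prop :=
  [/\ (forall i j b D, arc i j -> D \in Gb b i j -> 0 <= x i j D),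
      (forall i j, arc i j -> 0 <= y i j <= 1),
      (forall b i,
         \sum_(j | arc i j) \sum_(D in Gb b i j) x i j D
         - \sum_(j | arc j i) \sum_(D in Gb b j i) x j i D
         = \sum_(k in Kb b) os i k * demand k),
      (forall i j, arc i j ->
         \sum_(b : disp P) \sum_(D in Gb b i j) x i j D <= cap i j * y i j) &
      (forall i j b D, arc i j -> D \in Gb b i j ->
         x i j D <= (\sum_(k in D) demand k) * y i j)].

Definition PAi_feasible (x : node I -> node I -> {set comm I} -> R)
    (y : node I -> node I -> R) : Prop :=
  [/\ PA_feasible x y,
      (forall b k i, k \in Kb b ->
         \sum_(j | arc i j) \sum_(D in Gb b i j | k \in D) x i j D
         - \sum_(j | arc j i) \sum_(D in Gb b j i | D == [set k]) x j i D
         >= os i k * demand k) &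
      (forall b k i, k \in Kb b ->
         \sum_(j | arc i j) \sum_(D in Gb b i j | D == [set k]) x i j D
         - \sum_(j | arc j i) \sum_(D in Gb b j i | k \in D) x j i D
         <= os i k * demand k)].

End Formulations.

From HB Require Import structures.
From mathcomp Require Import all_boot all_order all_algebra.
Import Order.TTheory GRing.Theory Num.Theory.
Local Open Scope ring_scope.

(* For (ii), note that PA only constrains the total flow of each dispersion.
   Send two unit commodities from a common origin to two distinct sinks, fully
   disaggregated, and label the flow on each arc with the other commodity:
   aggregate conservation and all linking bounds hold, yet no flow of commodity
   k ever reaches its sink, violating the disaggregated PAi inequality there. *)

Lemma PAi_feasible_PA (R : realFieldType) (I : mcnd R) (P : partial_agg I)
    (x : node I -> node I -> {set comm I} -> R) (y : node I -> node I -> R) :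
  PAi_feasible P x y -> PA_feasible P x y.
Proof. by case. Qed.

Lemma big_option (R : nmodType) (T : finType) (F : option T -> R) :
  \sum_(j : option T) F j = F None + \sum_(t : T) F (Some t).
Proof.
rewrite (bigD1 None) //= (reindex_omap Some id) => [|[]//].
by under eq_bigl do rewrite eqxx.
Qed.

Section Disaggregation.
Variables (R : realFieldType) (I : mcnd R) (P : partial_agg I).

Lemma Gb_aggr0 (b : disp P) (i j : node I) :
  aggr b i j = set0 -> Gb b i j = [set [set k] | k in Kb b].
Proof. by rewrite /Gb => ->; rewrite eqxx set0U setD0. Qed.

Lemma sum_Gb_aggr0 (b : disp P) (i j : node I) (F : {set comm I} -> R) :
  aggr b i j = set0 -> \sum_(D in Gb b i j) F D = \sum_(k in Kb b) F [set k].
Proof. by move/Gb_aggr0->; rewrite big_imset // => k k' _ _ /set1_inj. Qed.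

End Disaggregation.

Section CrossedRouting.
Variable R : realFieldType.

Definition fork : mcnd R :=
  @MCND R (option bool) (fun i j => (i == None) && (j != None)) bool
    (fun _ => None) Some (fun _ => 1) (fun _ _ => 1) (fun _ _ => 0) (fun _ _ => 0)
    (fun _ => ler01) (fun _ _ _ => ler01) (fun _ _ _ => lexx 0) (fun _ _ _ => lexx 0).

Lemma fork_setT_neq0 : [set: comm fork] != set0.
Proof. by apply/set0Pn; exists true. Qed.

Lemma fork_unique_disp (k : comm fork) : exists! b : unit, k \in [set: comm fork].
Proof. by exists tt; split=> // -[]. Qed.

Definition fork_disaggregated : partial_agg fork :=
  @PartialAgg R fork unit (fun _ => setT) (fun _ _ _ => set0)
    (fun _ => fork_setT_neq0) (fun _ _ _ _ _ => erefl) (fun _ _ _ => sub0set _) fork_unique_disp.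

Definition crossed_flow (i j : node fork) (D : {set comm fork}) : R :=
  if j is Some k then (D == [set ~~ k])%:R else 0.

Lemma sum_crossed_flow (b : unit) (i j : node fork) :
  \sum_(D in @Gb R fork fork_disaggregated b i j) crossed_flow i j D = (j != None)%:R.
Proof.
rewrite sum_Gb_aggr0 //; case: j => [k|] /=; last by rewrite big1.
by rewrite big_mkcond big_bool !inE !(inj_eq set1_inj); case: k; rewrite /= ?addr0 ?add0r.
Qed.

Lemma crossed_flow_PA_feasible :
  PA_feasible fork_disaggregated crossed_flow (fun _ _ => 1).
Proof.
split.
- by move=> i [k|] *; rewrite /crossed_flow ?ler0n.
- by move=> *; rewrite ler01 lexx.
- move=> b i.
  under eq_bigr do rewrite sum_crossed_flow.
  under [X in _ - X]eq_bigr do rewrite sum_crossed_flow.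
  rewrite [RHS]big_mkcond big_bool !inE /os /= !mulr1.
  rewrite [X in X - _]big_mkcond [X in _ - X]big_mkcond !big_option !big_bool.
  by case: i => [[]|] /=; rewrite ?(add0r, addr0, subr0, sub0r, oppr0).
- move=> i j _; rewrite (big_pred1 tt) => [|[]//].
  by rewrite sum_crossed_flow mulr1 lern1 leq_b1.
- move=> i j b D _; rewrite Gb_aggr0 // => /imsetP[k _ ->].
  by rewrite big_set1 mulr1 /crossed_flow; case: j => *; rewrite ?lern1 ?leq_b1 ?ler01.
Qed.

Lemma crossed_flow_not_PAi :
  ~ PAi_feasible fork_disaggregated crossed_flow (fun _ _ => 1).
Proof.
case=> _ _ /(_ tt true (Some true) (in_setT _)).
rewrite [X in X - _]big_pred0 // [X in _ - X]big1 => [|j _].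
  by rewrite /os /= subr0 sub0r mulr1 oppr_ge0 ler10.
rewrite big1 // => D /andP[]; rewrite Gb_aggr0 // => /imsetP[k _ ->].
rewrite inE => /eqP <-.
by rewrite /crossed_flow (inj_eq set1_inj).
Qed.

End CrossedRouting.

Theorem theorem3 (R : realFieldType) :
  (forall (I : mcnd R) (P : partial_agg I)
          (x : node I -> node I -> {set comm I} -> R) (y : node I -> node I -> R),
      PAi_feasible P x y -> PA_feasible P x y) /\
  (exists (I : mcnd R) (P : partial_agg I)
          (x : node I -> node I -> {set comm I} -> R) (y : node I -> node I -> R),
      PA_feasible P x y /\ ~ PAi_feasible P x y).
Proof.
split; first exact: PAi_feasible_PA.
exists (fork R), (fork_disaggregated R), (@crossed_flow R), (fun _ _ => 1).
by split; [exact: crossed_flow_PA_feasible | exact: crossed_flow_not_PAi].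
Qed.
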